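(* Let $V$ be a quasi-regular mixed lattice vector space, let $A$ be an ideal of $V$ and put $W=A_{sp}-A_{sp}$. Then $W$ is a quasi-ideal, and there is no ideal $B$ of $V$ with $W\subseteq B\subseteq A$ and $B\neq A$. In particular, if $W$ is an ideal then $W=A$.
   Context: A mixed lattice vector space is a real vector space $V$ with two partial orderings $\le$ (initial) and $\preceq$ (specific), each compatible with the vector space structure ($x\le y\Rightarrow x+z\le y+z$ and $\alpha x\le\alpha y$ for $\alpha\ge 0$; likewise for $\preceq$), such that for all $x,y$ the mixed lower envelope $x\curlywedge y=\max\{w: w\preceq x,\ w\le y\}$ and mixed upper envelope $x\curlyvee y=\min\{w: x\preceq w,\ y\le w\}$ exist (max/min with respect to $\le$). Let $V_p=\{x:0\le x\}$, $V_{sp}=\{x:0\preceq x\}$ and for $E\subseteq V$, $E_p=E\cap V_p$, $E_{sp}=E\cap V_{sp}$. $V$ is quasi-regular if $V_{sp}$ is closed under $\curlywedge,\curlyvee$. A mixed lattice subspace is a linear subspace closed under $\curlywedge$ and $\curlyvee$. An ideal is a mixed lattice subspace $A$ that is $(\le)$-order convex ($x\le z\le y$, $x,y\in A$ imply $z\in A$). A quasi-ideal is a mixed lattice subspace $A$ that is mixed-order convex: $y\in A$ and $0\preceq x\le y$ imply $x\in A$. *)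

From mathcomp Require Import all_boot all_order all_algebra.
From mathcomp Require Import reals.
Set Implicit Arguments. Unset Strict Implicit. Unset Printing Implicit Defensive.
Import Order.TTheory GRing.Theory Num.Theory.
Local Open Scope ring_scope.

Section MixedLattice.
Variables (R : realType) (V : lmodType R).

Definition partial_order (r : V -> V -> Prop) : Prop :=
  (forall x, r x x) /\
  (forall x y, r x y -> r y x -> x = y) /\
  (forall x y z, r x y -> r y z -> r x z).

Definition vs_compatible (r : V -> V -> Prop) : Prop :=
  (forall x y z, r x y -> r (x + z) (y + z)) /\
  (forall (a : R) x y, 0 <= a -> r x y -> r (a *: x) (a *: y)).

(* Mixed lattice vector space with initial order [le], specific order [sle],
   mixed lower envelope [mlow x y = x ⋏ y] and mixed upper envelope
   [mup x y = x ⋎ y], characterized as max/min w.r.t. [le]. *)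
Definition mixed_lattice_space (le sle : V -> V -> Prop)
  (mlow mup : V -> V -> V) : Prop :=
  partial_order le /\ vs_compatible le /\
  partial_order sle /\ vs_compatible sle /\
  (forall x y, sle (mlow x y) x /\ le (mlow x y) y /\
     (forall w, sle w x -> le w y -> le w (mlow x y))) /\
  (forall x y, sle x (mup x y) /\ le y (mup x y) /\
     (forall w, sle x w -> le y w -> le (mup x y) w)).

Definition quasi_regular (sle : V -> V -> Prop) (mlow mup : V -> V -> V) : Prop :=
  forall x y, sle 0 x -> sle 0 y -> sle 0 (mlow x y) /\ sle 0 (mup x y).

Definition linear_subspace (A : V -> Prop) : Prop :=
  A 0 /\ (forall x y, A x -> A y -> A (x + y)) /\
  (forall (a : R) x, A x -> A (a *: x)).

Definition mixed_lattice_subspace (mlow mup : V -> V -> V) (A : V -> Prop) : Prop :=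
  linear_subspace A /\
  (forall x y, A x -> A y -> A (mlow x y) /\ A (mup x y)).

Definition ideal (le : V -> V -> Prop) (mlow mup : V -> V -> V) (A : V -> Prop) : Prop :=
  mixed_lattice_subspace mlow mup A /\
  (forall x y z, A x -> A y -> le x z -> le z y -> A z).

Definition quasi_ideal (le sle : V -> V -> Prop) (mlow mup : V -> V -> V)
  (A : V -> Prop) : Prop :=
  mixed_lattice_subspace mlow mup A /\
  (forall x y, A y -> sle 0 x -> le x y -> A x).

Definition sp_diff (sle : V -> V -> Prop) (A : V -> Prop) : V -> Prop :=
  fun w => exists a b, A a /\ sle 0 a /\ A b /\ sle 0 b /\ w = a - b.

Definition psubset (A B : V -> Prop) : Prop := forall x, A x -> B x.
Definition set_eq (A B : V -> Prop) : Prop := forall x, A x <-> B x.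

End MixedLattice.

(** Every envelope is translation invariant, so writing [x = a - b], [y = c - d]
    with [a, b, c, d] in [A_sp] gives [x ⋏ y = ((a + d) ⋏ (c + b)) - (b + d)],
    and quasi-regularity keeps [(a + d) ⋏ (c + b)] in [A_sp]; the same holds for
    [⋎], so [W] is a mixed lattice subspace.  Quasi-regularity also forces
    [0 ⪯ p ⇒ 0 ≤ p] (from [0 ⪯ 0 ⋏ p ⪯ 0] we get [0 = 0 ⋏ p ≤ p]), so
    [0 ⪯ x ≤ a - b ≤ a] puts [x] in [A_sp ⊆ W].  Finally every
    [x ∈ A] lies between [0 ⋏ x] and [0 ⋎ x], which both belong to [W], so an
    ideal containing [W] contains [A]. *)

From mathcomp Require Import all_boot all_order all_algebra.
From mathcomp Require Import reals.
Import Order.TTheory GRing.Theory Num.Theory.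
Local Open Scope ring_scope.

Section MixedLatticeSpace.
Context {R : realType} {V : lmodType R}.
Context {le sle : V -> V -> Prop} {mlow mup : V -> V -> V}.
Hypothesis HV : mixed_lattice_space le sle mlow mup.

Lemma ile_anti x y : le x y -> le y x -> x = y.
Proof. by case: HV => [[_ [anti _]] _]; apply: anti. Qed.

Lemma ile_trans x y z : le x y -> le y z -> le x z.
Proof. by case: HV => [[_ [_ trans]] _]; apply: trans. Qed.

Lemma ileD x y z : le x y -> le (x + z) (y + z).
Proof. by case: HV => _ [[addC _] _]; apply: addC. Qed.

Lemma sle_refl x : sle x x.
Proof. by case: HV => _ [_ [[refl _] _]]. Qed.

Lemma sle_anti x y : sle x y -> sle y x -> x = y.
Proof. by case: HV => _ [_ [[_ [anti _]] _]]; apply: anti. Qed.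

Lemma sle_trans x y z : sle x y -> sle y z -> sle x z.
Proof. by case: HV => _ [_ [[_ [_ trans]] _]]; apply: trans. Qed.

Lemma sleD x y z : sle x y -> sle (x + z) (y + z).
Proof. by case: HV => _ [_ [_ [[addC _] _]]]; apply: addC. Qed.

Lemma sleZ (a : R) x y : 0 <= a -> sle x y -> sle (a *: x) (a *: y).
Proof. by case: HV => _ [_ [_ [[_ scaleC] _]]]; apply: scaleC. Qed.

Lemma mlow_sle x y : sle (mlow x y) x.
Proof. by case: HV => _ [_ [_ [_ [/(_ x y) [? _] _]]]]. Qed.

Lemma mlow_ile x y : le (mlow x y) y.
Proof. by case: HV => _ [_ [_ [_ [/(_ x y) [_ [? _]] _]]]]. Qed.

Lemma mlow_max x y w : sle w x -> le w y -> le w (mlow x y).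
Proof. by case: HV => _ [_ [_ [_ [/(_ x y) [_ [_ max]] _]]]]; apply: max. Qed.

Lemma mup_sle x y : sle x (mup x y).
Proof. by case: HV => _ [_ [_ [_ [_ /(_ x y) [? _]]]]]. Qed.

Lemma mup_ile x y : le y (mup x y).
Proof. by case: HV => _ [_ [_ [_ [_ /(_ x y) [_ [? _]]]]]]. Qed.

Lemma mup_min x y w : sle x w -> le y w -> le (mup x y) w.
Proof. by case: HV => _ [_ [_ [_ [_ /(_ x y) [_ [_ min]]]]]]; apply: min. Qed.

Lemma ileD2r x y z : le (x + z) (y + z) <-> le x y.
Proof. by split=> [/(ileD _ _ (- z))|/(ileD _ _ z)]; rewrite ?addrK. Qed.

Lemma sleD2r x y z : sle (x + z) (y + z) <-> sle x y.
Proof. by split=> [/(sleD _ _ (- z))|/(sleD _ _ z)]; rewrite ?addrK. Qed.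

Lemma mlowD x y z : mlow (x + z) (y + z) = mlow x y + z.
Proof.
apply: ile_anti; last first.
  by apply: mlow_max; [apply/sleD2r; apply: mlow_sle | apply/ileD2r; apply: mlow_ile].
rewrite -[mlow (x + z) _](subrK z); apply/ileD2r; apply: mlow_max.
- by apply/(sleD2r _ _ z); rewrite subrK; apply: mlow_sle.
- by apply/(ileD2r _ _ z); rewrite subrK; apply: mlow_ile.
Qed.

Lemma mupD x y z : mup (x + z) (y + z) = mup x y + z.
Proof.
apply: ile_anti.
  by apply: mup_min; [apply/sleD2r; apply: mup_sle | apply/ileD2r; apply: mup_ile].
rewrite -[mup (x + z) _](subrK z); apply/ileD2r; apply: mup_min.
- by apply/(sleD2r _ _ z); rewrite subrK; apply: mup_sle.
- by apply/(ileD2r _ _ z); rewrite subrK; apply: mup_ile.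
Qed.

Lemma sle0D a b : sle 0 a -> sle 0 b -> sle 0 (a + b).
Proof. by move=> a0 /(sleD _ _ a); rewrite add0r addrC; apply: sle_trans. Qed.

Lemma sle0Z (r : R) a : 0 <= r -> sle 0 a -> sle 0 (r *: a).
Proof. by move=> r0 /(sleZ _ _ _ r0); rewrite scaler0. Qed.

Lemma sle0N a : sle a 0 -> sle 0 (- a).
Proof. by move=> /(sleD _ _ (- a)); rewrite subrr add0r. Qed.

Lemma sle0_ile0 : quasi_regular sle mlow mup -> forall p, sle 0 p -> le 0 p.
Proof.
move=> Hqr p p0.
have low0 : mlow 0 p = 0 by apply: sle_anti; [apply: mlow_sle | case: (Hqr 0 p (sle_refl 0) p0)].
by rewrite -low0; apply: mlow_ile.
Qed.

Section SpDiff.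
Context {A : V -> Prop}.
Hypothesis HA : linear_subspace A.

Lemma subspace_opp x : A x -> A (- x).
Proof. by case: HA => _ [_ AZ] Ax; rewrite -scaleN1r; apply: AZ. Qed.

Lemma subspace_sub x y : A x -> A y -> A (x - y).
Proof. by case: HA => _ [AD _] Ax Ay; apply: AD => //; apply: subspace_opp. Qed.

Lemma sp_diff_sub : psubset (sp_diff sle A) A.
Proof. by move=> _ [a [b [Aa [_ [Ab [_ ->]]]]]]; apply: subspace_sub. Qed.

Lemma sp_diff_sp a : A a -> sle 0 a -> sp_diff sle A a.
Proof.
by case: HA => A0 _ Aa a0; exists a, 0; rewrite subr0; do !split => //; apply: sle_refl.
Qed.

Lemma sp_diff_linear : linear_subspace (sp_diff sle A).
Proof.
case: HA => A0 [AD AZ]; split; first exact: sp_diff_sp (sle_refl 0).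
split=> [_ _ [a [b [Aa [a0 [Ab [b0 ->]]]]]] [c [d [Ac [c0 [Ad [d0 ->]]]]]]|].
  by exists (a + c), (b + d); rewrite opprD addrACA; do !split; auto using sle0D.
move=> r _ [a [b [Aa [a0 [Ab [b0 ->]]]]]].
have [r0|r0] := lerP 0 r.
  by exists (r *: a), (r *: b); rewrite scalerBr; do !split; auto using sle0Z.
have Nr0 : 0 <= - r by rewrite oppr_ge0 ltW.
have -> : r *: (a - b) = (- r) *: b - (- r) *: a.
  by rewrite -scalerBr scaleNr -scalerN opprB.
by exists ((- r) *: b), ((- r) *: a); do !split; auto using sle0Z.
Qed.

Lemma sp_diff_closed (op : V -> V -> V) :
  (forall x y z, op (x + z) (y + z) = op x y + z) ->
  (forall x y, A x -> A y -> A (op x y)) ->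
  (forall x y, sle 0 x -> sle 0 y -> sle 0 (op x y)) ->
  forall x y, sp_diff sle A x -> sp_diff sle A y -> sp_diff sle A (op x y).
Proof.
case: HA => _ [AD _] opD opA opsp.
move=> _ _ [a [b [Aa [a0 [Ab [b0 ->]]]]]] [c [d [Ac [c0 [Ad [d0 ->]]]]]].
have -> : a - b = (a + d) - (b + d) by rewrite opprD addrACA subrr addr0.
have -> : c - d = (c + b) - (b + d) by rewrite (addrC b) opprD addrACA subrr addr0.
exists (op (a + d) (c + b)), (b + d); rewrite opD.
by do !split; auto using sle0D.
Qed.

End SpDiff.

Section Ideal.
Context {A : V -> Prop}.
Hypothesis HA : ideal le mlow mup A.

Lemma sp_diff_quasi_ideal :
  quasi_regular sle mlow mup -> quasi_ideal le sle mlow mup (sp_diff sle A).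
Proof.
move=> Hqr; case: HA => [[Alin Aenv] Aconv]; split; last first.
  move=> x _ [a [b [Aa [a0 [Ab [b0 ->]]]]]] x0 xle.
  apply: (sp_diff_sp Alin) => //.
  apply: (Aconv 0 a) => //; [by case: Alin | exact: (sle0_ile0 Hqr) |].
  apply: ile_trans xle _.
  by have /(ileD _ _ (a - b)) := sle0_ile0 Hqr _ b0; rewrite add0r (addrC b) subrK.
split; first exact: sp_diff_linear.
move=> x y; split; apply: sp_diff_closed => //.
- exact: mlowD.
- by move=> u v Au Av; case: (Aenv u v Au Av).
- by move=> u v u0 v0; case: (Hqr u v u0 v0).
- exact: mupD.
- by move=> u v Au Av; case: (Aenv u v Au Av).
- by move=> u v u0 v0; case: (Hqr u v u0 v0).
Qed.

Lemma sp_diff_maximal (B : V -> Prop) : ideal le mlow mup B ->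
  psubset (sp_diff sle A) B -> psubset B A -> set_eq B A.
Proof.
case: HA => [[Alin Aenv] _] [_ Bconv] WB BA x; split; first exact: BA.
move=> Ax; have [A_low A_up] := Aenv 0 x (proj1 Alin) Ax.
apply: (Bconv (mlow 0 x) (mup 0 x)); try apply: WB.
- exists 0, (- mlow 0 x); rewrite sub0r opprK.
  do !split => //; [by case: Alin | exact: sle_refl | exact: subspace_opp |].
  exact/sle0N/mlow_sle.
- exact: (sp_diff_sp Alin _ A_up (mup_sle 0 x)).
- exact: mlow_ile.
- exact: mup_ile.
Qed.

End Ideal.

End MixedLatticeSpace.

Theorem theorem4p12 (R : realType) (V : lmodType R)
  (le sle : V -> V -> Prop) (mlow mup : V -> V -> V)
  (HV : mixed_lattice_space le sle mlow mup)
  (Hqr : quasi_regular sle mlow mup)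
  (A : V -> Prop) (HA : ideal le mlow mup A) :
  quasi_ideal le sle mlow mup (sp_diff sle A) /\
  (forall B : V -> Prop, ideal le mlow mup B ->
     psubset (sp_diff sle A) B -> psubset B A -> set_eq B A) /\
  (ideal le mlow mup (sp_diff sle A) -> set_eq (sp_diff sle A) A).
Proof.
have [[Alin _] _] := HA.
split; first exact: sp_diff_quasi_ideal.
split; first exact: sp_diff_maximal.
by move=> HW; apply: (sp_diff_maximal HV HA _ HW) => //; apply: sp_diff_sub.
Qed.
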